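(* Let $\delta>0$. For any $m>64\pi^2$, $\kappa>0$ and $\mu^\star>0$ one can find $\varepsilon\in(0,1)$, $\ell>0$ and $\gamma>0$ such that: $\ell\ge\delta$; $$-2^5\xi^2+(\mu^\star\varepsilon+6\ell)\xi-(\gamma+1)\ell\le0\quad\text{for all }\xi\in\mathbb{R};$$ $2\gamma^2-3\ell\ge0$; $e^{\varepsilon}<\frac{1+2\kappa}{1+\kappa}$; $e^{(\gamma+1)\varepsilon}(1+3\varepsilon^3)<\frac{m}{64\pi^2}$; and $$g(t):=e^{(\ell-\delta)t}\big(1+(\varepsilon-\ell t)^3\big)\ge1+\varepsilon^3\quad\text{for all }t\in(0,\varepsilon/\ell).$$ *)

From Stdlib Require Import Reals Lra.
Open Scope R_scope.

Definition gfun (delta eps l t : R) : R :=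
  exp ((l - delta) * t) * (1 + (eps - l * t) ^ 3).

From Stdlib Require Import Reals Lra Lia.
From Coquelicot Require Import Coquelicot.
Open Scope R_scope.

(* Take [l = 2 delta] and [gamma = l + 1]. The discriminant condition then only needs
   [mustar eps < l], and [g(t) >= (1 + delta t)(1 + (eps - l t)^3)] together with
   [eps^3 - (eps - l t)^3 <= 3 eps^2 l t] reduces the bound on [g] to
   [3 eps^2 l <= delta]. Each requirement on [eps] is thus a strict inequality between
   functions continuous in [eps] that holds at [eps = 0], so all of them hold together
   for every small enough [eps > 0]. *)

Lemma quadratic_nonpos (a b c : R) :
  0 < a -> b ^ 2 <= 4 * a * c -> forall x : R, - a * x ^ 2 + b * x - c <= 0.
Proof.
  intros ha hdisc x.
  assert (hsq : 0 <= (2 * a * x - b) ^ 2) by apply pow2_ge_0.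
  nra.
Qed.

Lemma cube_sub_cube_le (e s : R) : 0 <= s <= e -> e ^ 3 - s ^ 3 <= 3 * e ^ 2 * (e - s).
Proof.
  intros hs.
  assert (hfac : e ^ 3 - s ^ 3 = (e - s) * (e ^ 2 + e * s + s ^ 2)) by ring.
  assert (hsum : e ^ 2 + e * s + s ^ 2 <= 3 * e ^ 2) by nra.
  rewrite hfac, (Rmult_comm (3 * e ^ 2)).
  apply Rmult_le_compat_l; lra.
Qed.

Lemma gfun_ge_1_add_cube (delta eps l : R) :
  0 < l -> 3 * eps ^ 2 * l <= l - delta ->
  forall t : R, 0 < t -> t < eps / l -> gfun delta eps l t >= 1 + eps ^ 3.
Proof.
  intros hl hsmall t ht0 ht1.
  assert (hlt : l * t < eps).
  { apply (Rmult_lt_compat_l l) in ht1; [|lra].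
    replace (l * (eps / l)) with eps in ht1 by (field; lra). lra. }
  set (s := eps - l * t).
  assert (hs : 0 <= s <= eps) by (unfold s; nra).
  assert (hcube : eps ^ 3 - s ^ 3 <= (l - delta) * t).
  { eapply Rle_trans; [apply cube_sub_cube_le; exact hs|].
    replace (3 * eps ^ 2 * (eps - s)) with (3 * eps ^ 2 * l * t) by (unfold s; ring).
    apply Rmult_le_compat_r; lra. }
  assert (hexp : 1 + (l - delta) * t <= exp ((l - delta) * t)) by apply exp_ineq1_le.
  assert (hs3 : 0 <= s ^ 3) by (apply pow_le; lra).
  assert (hrate : 0 <= l - delta).
  { assert (0 <= eps ^ 2) by apply pow2_ge_0. nra. }
  assert (hlin : 0 <= (l - delta) * t) by (apply Rmult_le_pos; lra).
  unfold gfun; fold s. apply Rle_ge.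
  apply Rle_trans with ((1 + (l - delta) * t) * (1 + s ^ 3)).
  - assert (0 <= (l - delta) * t * s ^ 3) by (apply Rmult_le_pos; lra). nra.
  - apply Rmult_le_compat_r; lra.
Qed.

Lemma at_right_lt_of_continuous (f : R -> R) (x M : R) :
  continuous f x -> f x < M -> at_right x (fun y => f y < M).
Proof.
  intros hf hfx.
  apply filter_le_within.
  exact (hf (fun u => u < M) (open_lt M (f x) hfx)).
Qed.

Ltac at_right_by_continuity :=
  lazymatch goal with |- at_right ?x (fun e => @?f e < ?M) =>
    apply (at_right_lt_of_continuous f x M);
    [apply (ex_derive_continuous (K := R_AbsRing) (V := R_NormedModule));
     auto_derive; auto
    | cbv beta]
  end.

Theorem lemma3p4 (delta : R) (hdelta : 0 < delta) :
  forall (m kappa mustar : R),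
    64 * PI ^ 2 < m -> 0 < kappa -> 0 < mustar ->
    exists (eps l gamma : R),
      0 < eps /\ eps < 1 /\ 0 < l /\ 0 < gamma /\
      delta <= l /\
      (forall xi : R,
          - 2 ^ 5 * xi ^ 2 + (mustar * eps + 6 * l) * xi - (gamma + 1) * l <= 0) /\
      2 * gamma ^ 2 - 3 * l >= 0 /\
      exp eps < (1 + 2 * kappa) / (1 + kappa) /\
      exp ((gamma + 1) * eps) * (1 + 3 * eps ^ 3) < m / (64 * PI ^ 2) /\
      (forall t : R, 0 < t -> t < eps / l ->
          gfun delta eps l t >= 1 + eps ^ 3).
Proof.
  intros m kappa mustar hm hkappa hmustar.
  set (l := 2 * delta).
  set (gamma := l + 1).
  assert (hkappa1 : 1 < (1 + 2 * kappa) / (1 + kappa)).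
  { apply Rlt_div_r; lra. }
  assert (hm1 : 1 < m / (64 * PI ^ 2)).
  { assert (0 < PI) by apply PI_RGT_0. apply Rlt_div_r; nra. }
  assert (hsmall : at_right 0 (fun e =>
    0 < e /\ e < 1 /\ mustar * e < l /\ 3 * e ^ 2 * l < l - delta /\
    exp e < (1 + 2 * kappa) / (1 + kappa) /\
    exp ((gamma + 1) * e) * (1 + 3 * e ^ 3) < m / (64 * PI ^ 2))).
  { repeat apply filter_and;
      [unfold at_right, within; apply filter_forall; auto | ..];
      at_right_by_continuity; rewrite ?pow_i, ?Rmult_0_r, ?exp_0 by lia; unfold l; lra. }
  destruct (Hierarchy.filter_ex _ hsmall) as (eps & heps0 & heps1 & hmu & hcube & hexp & hexpc).
  exists eps, l, gamma; repeat split; try (unfold gamma, l in *; nra).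
  - apply quadratic_nonpos; [lra|].
    assert (hB : 0 <= mustar * eps + 6 * l <= 7 * l) by (unfold l in *; nra).
    assert (hB2 : (mustar * eps + 6 * l) ^ 2 <= (7 * l) ^ 2) by (apply pow_incr; lra).
    unfold gamma, l in *; nra.
  - apply gfun_ge_1_add_cube; unfold l in *; lra.
Qed.
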